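(* Let $L\ge 1$ and $0\le l<m\le L$. For all $\mathbf{i},\mathbf{a}\in B_l$, $\mathbf{j}\in B_m$ and $\mathbf{b}\in B_{m-l}$ one has \[ M(q,t)^{\mathbf{a},\mathbf{b}}_{\mathbf{i},\mathbf{j}} \;=\; S(q,t)^{\mathbf{a},\mathbf{b}}_{\mathbf{i},\mathbf{j}}, \] as formal power series in $q$ with coefficients in $\mathbb{Q}(t)$ (the left side being a rational function of $q,t$, expanded in $q$).
   Context: Notation: $B_l=\{\mathbf{i}=(i_1,\dots,i_L)\in\{0,1\}^L : i_1+\dots+i_L=l\}$; for $\mathbf{x},\mathbf{y}\in\{0,1\}^L$, $\mathbf{x}\le\mathbf{y}$ means $\mathbf{y}-\mathbf{x}\in\mathbb{Z}_{\ge0}^L$; columns are indexed by $\mathbb{Z}_L=\{1,\dots,L\}$ cyclically; $\theta(\text{true})=1,\theta(\text{false})=0$. Two-row pairing weights $M$. Picture $\mathbf{j}\in B_m$ as an upper row of $L$ boxes with a ball in column $k$ iff $j_k=1$, and $\mathbf{i}\in B_l$ as a lower row with a ball in column $k$ iff $i_k=1$. A pairing $\phi$ is an injection from the lower balls to the upper balls built as follows: the lower balls are processed from left to right (increasing column); when processing a lower ball in column $c$, the upper balls not yet chosen are called free; if the upper box in column $c$ holds a free ball, it must be chosen (trivial pairing, weight $1$); otherwise any free upper ball, say in column $c'\neq c$, may be chosen, with weight \[ \frac{(1-t)\,t^{s}\,q^{w}}{1-q\,t^{f}}, \] where $f$ is the number of free upper balls just before this choice, $s$ is the number of free upper balls in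 the columns $c'+1,c'+2,\dots,c-1$ (indices mod $L$, i.e. strictly between going cyclically leftwards from $c$ to $c'$), and $w=1$ if $c<c'$ (wrapping) and $w=0$ if $c'<c$. The weight of $\phi$ is the product of the weights of its $l$ choices. Define \[ M(q,t)^{\mathbf{a},\mathbf{b}}_{\mathbf{i},\mathbf{j}}=\theta(\mathbf{a}+\mathbf{b}=\mathbf{j})\sum_{\phi}\mathrm{wt}(\phi), \] the sum over pairings $\phi$ whose set of chosen upper balls is exactly the set of positions of $1$'s in $\mathbf{a}$. $t$-oscillators: $F=\bigoplus_{d\ge0}\mathbb{Q}(t)|d\rangle$ with $\mathbf{a}^+|d\rangle=|d+1\rangle$, $\mathbf{a}^-|d\rangle=(1-t^d)|d-1\rangle$ ($|-1\rangle=0$), $\mathbf{k}|d\rangle=t^d|d\rangle$, $q^{\mathbf{h}}|d\rangle=q^d|d\rangle$. Five-vertex weights $S^{ab}_{ij}$ ($i$ = left, $a$ = right, $j$ = bottom, $b$ = top edge, all in $\{0,1\}$), valued in operators on $F$: $S^{00}_{00}=1$, $S^{10}_{11}=1$, $S^{01}_{01}=\mathbf{k}$, $S^{10}_{01}=\mathbf{a}^-$, $S^{00}_{10}=\mathbf{a}^+$, and $S^{ab}_{ij}=0$ otherwise. Define \[ S(q,t)^{\mathbf{a},\mathbf{b}}_{\mathbf{i},\mathbf{j}}=(1-q\,t^{m-l})\,\mathrm{tr}_F\bigl(q^{\mathbf{h}}S^{a_1b_1}_{i_1j_1}S^{a_2b_2}_{i_2j_2}\cdots S^{a_Lb_L}_{i_Lj_L}\bigr),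 \] where $\mathrm{tr}_F(A)=\sum_{d\ge0}\langle d|A|d\rangle$ is taken as a formal power series in $q$. *)

From mathcomp Require Import all_boot all_order all_algebra.
From mathcomp Require Import fraction.
Set Implicit Arguments. Unset Strict Implicit. Unset Printing Implicit Defensive.
Import Order.TTheory GRing.Theory Num.Theory.
Local Open Scope ring_scope.

Definition K : fieldType := {fraction {poly rat}}.
Definition tt_ : K := FracField.tofrac ('X : {poly rat}).

(* Formal power series in q over Q(t): coefficient sequences. *)
Definition series := nat -> K.
Definition ser1 : series := fun n => if n == 0%N then 1 else 0.
Definition sermul (f g : series) : series :=
  fun n => \sum_(k < n.+1) f k * g (n - k)%N.

(* 0/1 vectors of length L; columns 1..L are encoded as 'I_L (column k <-> k-1). *)
Definition vec (L : nat) := {ffun 'I_L -> bool}.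
Definition inB (L l : nat) (x : vec L) : bool := (\sum_(k : 'I_L) (x k : nat) == l)%N.
Definition sum_eq (L : nat) (a b j : vec L) : bool :=
  [forall k, ((a k : nat) + (b k : nat) == (j k : nat))%N].
Definition supp (L : nat) (x : vec L) : {set 'I_L} := [set k | x k].

Section Pairing.
Variables (L : nat) (i : vec L).

(* weight of choosing the free upper ball c' for the lower ball c, when the set of
   free upper balls is [free], expanded as a power series in q:
   (1-t) t^s q^w / (1 - q t^f) = (1-t) t^s \sum_{k>=0} q^(w+k) t^(f k). *)
Definition nfree (free : {set 'I_L}) : nat := #|free|.
Definition sgap (c c' : 'I_L) (free : {set 'I_L}) : nat :=
  #|[set x in free | (0 < (x + L - c') %% L < (c + L - c') %% L)%N]|.
Definition wrap (c c' : 'I_L) : nat := (c < c')%N.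
Definition wtser (c c' : 'I_L) (free : {set 'I_L}) : series :=
  fun n => if (wrap c c' <= n)%N
           then (1 - tt_) * tt_ ^+ (sgap c c' free)
                  * tt_ ^+ (nfree free * (n - wrap c c'))
           else 0.

(* sum of weights of all pairings, processing the lower balls in the columns [cols]
   (in order), with current set of free upper balls [free]; [chosen_ok] tests at the
   end whether the set of chosen upper balls is the prescribed one. *)
Fixpoint pairsum (cols : seq 'I_L) (free : {set 'I_L})
    (chosen_ok : {set 'I_L} -> bool) : series :=
  match cols with
  | [::] => if chosen_ok free then ser1 else (fun _ => 0)
  | c :: cs =>
      if ~~ i c then pairsum cs free chosen_ok
      else if c \in free then pairsum cs (free :\ c) chosen_ok
      else fun n => \sum_(c' in free | c' != c)
                      sermul (wtser c c' free) (pairsum cs (free :\ c') chosen_ok) n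
  end.
End Pairing.

Definition Mser (L : nat) (a b i j : vec L) : series :=
  fun n => if sum_eq a b j
           then pairsum i (enum 'I_L) (supp j)
                  (fun final_free => (supp j :\: final_free) == supp a) n
           else 0.

(* The t-oscillator Fock space F = \bigoplus_d Q(t)|d>, encoded as {poly K} with |d> = 'X^d. *)
Definition Fock := {poly K}.
Definition aplus (p : Fock) : Fock := p * 'X.
Definition aminus (p : Fock) : Fock := \poly_(d < size p) ((1 - tt_ ^+ d.+1) * p`_d.+1).
Definition kop (p : Fock) : Fock := \poly_(d < size p) (tt_ ^+ d * p`_d).

(* five-vertex weights S^{ab}_{ij} (i left, a right, j bottom, b top) *)
Definition Sop (a b i j : bool) : Fock -> Fock :=
  match a, b, i, j with
  | false, false, false, false => id
  | true, false, true, true => id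
  | false, true, false, true => kop
  | true, false, false, true => aminus
  | false, false, true, false => aplus
  | _, _, _, _ => fun _ => 0
  end.

Definition Sprod (L : nat) (a b i j : vec L) (p : Fock) : Fock :=
  foldr (fun k acc => Sop (a k) (b k) (i k) (j k) acc) p (enum 'I_L).

(* tr_F(q^h X) as power series: coefficient of q^d is <d|X|d> *)
Definition trser (L : nat) (a b i j : vec L) : series :=
  fun d => (Sprod a b i j ('X ^+ d))`_d.

(* S(q,t)^{a,b}_{i,j} = (1 - q t^(m-l)) tr_F(...) *)
Definition Sser (L l m : nat) (a b i j : vec L) : series :=
  fun n => trser a b i j n
           - (if n is n'.+1 then tt_ ^+ (m - l) * trser a b i j n' else 0).

(* Both sides are built column by column, so we compare them on partial
   configurations: the lower balls still to be paired lie in the columns [cs]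
   and the free upper balls form the set [F].  In the transfer matrix, a lower
   ball in a column [c] with no free ball above it is a creation operator [a^+].
   Commuting [a^+] leftwards through the row and then once around the trace of
   [q^h] (which costs a factor [q]), every free column contributes a factor [t],
   and every free column [c'] of [a] leaves in addition a term (1-t) t^s in which
   its annihilator is consumed: that term is the pairing of [c] with [c'].  So
   the partial traces satisfy a linear recursion in [q] whose solution produces
   the weights (1-t) t^s q^w / (1 - q t^f).  Once every lower ball is paired,
   only the [k] operators in the columns of [b] remain; their trace
   1 / (1 - q t^(m-l)) is cancelled by the prefactor of [S]. *)

From Pilot Require Import Defs.
From mathcomp Require Import all_boot all_order all_algebra.
From mathcomp Require Import ring zify.
Set Implicit Arguments. Unset Strict Implicit. Unset Printing Implicit Defensive.
Import Order.TTheory GRing.Theory Num.Theory.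
Local Open Scope ring_scope.

Lemma coef_kop p d : (kop p)`_d = tt_ ^+ d * p`_d.
Proof. by rewrite /kop coef_poly; case: ltnP => // H; rewrite nth_default // mulr0. Qed.

Lemma coef_aminus p d : (aminus p)`_d = (1 - tt_ ^+ d.+1) * p`_d.+1.
Proof.
rewrite /aminus coef_poly; case: ltnP => // H.
by rewrite nth_default ?mulr0 // (leq_trans H).
Qed.

Lemma coef_aplus p d : (aplus p)`_d = if d is d'.+1 then p`_d' else 0.
Proof. by rewrite /aplus coefMX; case: d. Qed.

Section LinearFun.
Variables (f : Fock -> Fock) (linf : linear f).

Lemma linear_funD p q : f (p + q) = f p + f q.
Proof. by have := linf 1 p q; rewrite !scale1r. Qed.

Lemma linear_fun0 : f 0 = 0.
Proof. by have := linf (-1) 0 0; rewrite scaler0 add0r scaleN1r addNr. Qed.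

Lemma linear_funZ c p : f (c *: p) = c *: f p.
Proof. by rewrite -[c *: p]addr0 linf linear_fun0 addr0. Qed.

Lemma linear_fun_sum (I : Type) (r : seq I) (P : pred I) (F : I -> Fock) :
  f (\sum_(x <- r | P x) F x) = \sum_(x <- r | P x) f (F x).
Proof. exact: (big_morph f linear_funD linear_fun0). Qed.

End LinearFun.

Lemma linear_aplus : linear aplus.
Proof. by move=> c p q; rewrite /aplus mulrDl scalerAl. Qed.

Lemma linear_kop : linear kop.
Proof. by move=> c p q; apply/polyP=> d; rewrite !(coef_kop, coefD, coefZ); ring. Qed.

Lemma linear_aminus : linear aminus.
Proof. by move=> c p q; apply/polyP=> d; rewrite !(coef_aminus, coefD, coefZ); ring. Qed.

Lemma linear_Sop a b i j : linear (Sop a b i j).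
Proof.
case: a; case: b; case: i; case: j;
  by [exact: linear_aplus | exact: linear_kop | exact: linear_aminus
     | move=> c p q /=; rewrite ?scaler0 ?addr0].
Qed.

Lemma kop_aplus p : kop (aplus p) = tt_ *: aplus (kop p).
Proof.
apply/polyP=> -[|d]; rewrite coefZ coef_kop !coef_aplus ?mulr0 //.
by rewrite coef_kop exprS mulrA.
Qed.

Lemma aminus_aplus p : aminus (aplus p) = tt_ *: aplus (aminus p) + (1 - tt_) *: p.
Proof.
apply/polyP=> -[|d]; rewrite coefD !coefZ coef_aminus !coef_aplus.
  by rewrite mulr0 add0r expr1.
by rewrite coef_aminus exprS; ring.
Qed.

Lemma Sop_aplus (A B I J : bool) p : (A + B = J)%N ->
  Sop A B I J (aplus p) = tt_ ^+ J *: aplus (Sop A B I J p)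
     + (if A then (1 - tt_) *: Sop false false I false p else 0).
Proof.
case: A; case: B; case: I; case: J => //= _;
  rewrite ?expr0 ?expr1 ?scale1r ?addr0 //.
- by rewrite -scalerDl addrC subrK scale1r.
- by rewrite aminus_aplus.
- by rewrite /aplus mul0r scaler0.
- by rewrite kop_aplus.
Qed.

Lemma kop_Xn n : kop 'X^n = tt_ ^+ n *: 'X^n.
Proof.
apply/polyP => d; rewrite coef_kop coefZ coefXn.
by case: eqP => [->|]; rewrite ?mulr1 ?mulr0.
Qed.

Lemma size_aminus p : (size (aminus p) <= (size p).-1)%N.
Proof.
apply/leq_sizeP => d hd; rewrite coef_aminus nth_default ?mulr0 //.
by move: hd; case: (size p) => //= n; rewrite ltnS.
Qed.

Lemma size_kop p : (size (kop p) <= size p)%N.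
Proof. by apply/leq_sizeP => d hd; rewrite coef_kop nth_default ?mulr0. Qed.

Fixpoint opprod (I : Type) (f : I -> Fock -> Fock) (s : seq I) (p : Fock) : Fock :=
  if s is x :: s' then f x (opprod f s' p) else p.

Lemma opprod_cat (I : Type) (f : I -> Fock -> Fock) s1 s2 p :
  opprod f (s1 ++ s2) p = opprod f s1 (opprod f s2 p).
Proof. by elim: s1 => //= x s1 ->. Qed.

Lemma eq_opprod (I : Type) (f g : I -> Fock -> Fock) s p :
  (forall x, f x =1 g x) -> opprod f s p = opprod g s p.
Proof. by move=> efg; elim: s => //= x s ->; rewrite efg. Qed.

Lemma linear_opprod (I : Type) (f : I -> Fock -> Fock) s :
  (forall x, linear (f x)) -> linear (opprod f s).
Proof. by move=> linf; elim: s => [|x s IH] //= c p q; rewrite IH linf. Qed.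

Lemma opprod_with_notin (I : eqType) (f : I -> Fock -> Fock) r g s p :
  r \notin s -> opprod [eta f with r |-> g] s p = opprod f s p.
Proof.
elim: s => //= y s IH; rewrite inE negb_or => /andP[ry /IH ->].
by rewrite eq_sym (negbTE ry).
Qed.

Lemma opprod_eq0 (I : eqType) (f : I -> Fock -> Fock) s x p :
  (forall y, linear (f y)) -> x \in s -> f x =1 (fun _ => 0) -> opprod f s p = 0.
Proof.
move=> linf + fx0; elim: s => //= y s IH; rewrite inE.
case: eqP => [<- _|_ /IH ->]; first exact: fx0.
exact: linear_fun0.
Qed.

Lemma size_opprod_aminus (I : eqType) (f : I -> Fock -> Fock) s x p :
  (forall y q, size (f y q) <= size q)%N -> x \in s -> f x = aminus ->
  (size (opprod f s p) <= (size p).-1)%N.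
Proof.
move=> fsize + fx; elim: s => //= y s IH; rewrite inE.
case: eqP => [<- _|_ /IH]; last exact: leq_trans (fsize _ _).
rewrite fx; apply: leq_trans (size_aminus _) _; rewrite -!subn1 leq_sub2r //.
by elim: s {IH} => //= z s IH; apply: leq_trans (fsize _ _) IH.
Qed.

Lemma opprod_kop (I : Type) (g : I -> Fock -> Fock) (P : pred I) s n :
  (forall y, g y = if P y then kop else id) ->
  opprod g s 'X^n = tt_ ^+ (n * count P s) *: 'X^n.
Proof.
move=> eg; elim: s => [|x s IH] /=; first by rewrite muln0 expr0 scale1r.
rewrite IH eg; case: (P x) => /=; last by rewrite add0n.
by rewrite (linear_funZ linear_kop) kop_Xn scalerA -exprD mulnDr muln1 addnC.
Qed.

Lemma Sprod_opprod L (a b i j : vec L) p :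
  Sprod a b i j p = opprod (fun k => Sop (a k) (b k) (i k) (j k)) (enum 'I_L) p.
Proof. by rewrite /Sprod; elim: (enum 'I_L) => //= x s ->. Qed.

Definition ord_lt (L : nat) (x y : 'I_L) : bool := (x < y)%N.

Lemma ord_lt_trans L : transitive (@ord_lt L).
Proof. by move=> x y z; apply: ltn_trans. Qed.

Lemma sorted_ord_enum L : sorted (@ord_lt L) (enum 'I_L).
Proof. by have := iota_ltn_sorted 0 L; rewrite -val_enum_ord sorted_map. Qed.

Lemma sorted_ord_lt_notin L (c : 'I_L) cs : sorted (@ord_lt L) (c :: cs) -> c \notin cs.
Proof.
move=> srt; apply/negP => ccs; have := allP (order_path_min (@ord_lt_trans L) srt) c ccs.
by rewrite /ord_lt ltnn.
Qed.

Lemma sorted_split_at L (s : seq 'I_L) (c : 'I_L) : sorted (@ord_lt L) s -> c \in s ->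
  s = filter (fun x : 'I_L => x < c)%N s ++ c :: filter (fun x : 'I_L => c < x)%N s.
Proof.
elim: s => [|x s IH] //= srt.
have x_lt : all (fun y : 'I_L => x < y)%N s := order_path_min (@ord_lt_trans L) srt.
rewrite inE; case: (c =P x) => [-> _|cx cs].
  have -> : filter (fun y : 'I_L => y < x)%N s = [::].
    rewrite -(filter_pred0 s); apply: eq_in_filter => y ys.
    by rewrite /= ltnNge (ltnW (allP x_lt y ys)).
  rewrite ltnn /= -{1}(filter_predT s); congr (_ :: _).
  by apply: eq_in_filter => y ys; rewrite (allP x_lt y ys).
have xc : (x < c)%N := allP x_lt c cs.
by rewrite xc /= ltnNge (ltnW xc) /= -IH ?(path_sorted srt).
Qed.

Lemma card_set_count L (P : pred 'I_L) : #|[set x | P x]| = count P (enum 'I_L).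
Proof. by rewrite cardE size_filter enumT; apply: eq_count => x; rewrite /= inE. Qed.

Lemma cyclic_between (x r c L : nat) : (x < L)%N -> (r < L)%N -> (c < L)%N -> r != c ->
  (0 < (x + L - r) %% L < (c + L - r) %% L)%N
  = if (r < c)%N then (r < x < c)%N else (r < x)%N || (x < c)%N.
Proof.
have mod_diff y : (y < L)%N -> (r < L)%N ->
    ((y + L - r) %% L = if (r <= y)%N then y - r else y + L - r)%N.
  move=> yL rL; case: leqP => ry; last by rewrite modn_small //; lia.
  by rewrite (_ : y + L - r = y - r + L)%N ?modnDr ?modn_small //; lia.
move=> xL rL cL rc; rewrite !mod_diff //.
case: (leqP r x) => h1; case: (leqP r c) => h2; case: (ltnP r c) => h3;
  apply/idP/idP; lia.
Qed.

Definition trace_coef (A : Fock -> Fock) (n : nat) : K := (A 'X^n)`_n.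

(* tr(q^h a^+ A) = q tr(q^h A a^+). *)
Lemma trace_coef_aplus A n :
  trace_coef (aplus \o A) n = if n is n'.+1 then trace_coef (A \o aplus) n' else 0.
Proof. by rewrite /trace_coef /= coef_aplus; case: n => // n; rewrite /aplus -exprSr. Qed.

Section CreationMove.
Variables (L : nat) (f red : 'I_L -> Fock -> Fock) (fr st : pred 'I_L).
Hypothesis linf : forall x, linear (f x).
Hypothesis f_aplus : forall x p, f x (aplus p) =
  tt_ ^+ fr x *: aplus (f x p) + (if st x then (1 - tt_) *: red x p else 0).

Definition move_weight (s : seq 'I_L) (r : 'I_L) : K :=
  (1 - tt_) * tt_ ^+ count (fun x => fr x && ord_lt r x) s.

Lemma opprod_aplus s p : sorted (@ord_lt L) s ->
  opprod f s (aplus p) = tt_ ^+ count fr s *: aplus (opprod f s p)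
  + \sum_(r <- s | st r) move_weight s r *: opprod [eta f with r |-> red r] s p.
Proof.
elim: s => [|x s IH] /= srt; first by rewrite big_nil addr0 expr0 scale1r.
have x_lt : all (ord_lt x) s := order_path_min (@ord_lt_trans L) srt.
have xNs := sorted_ord_lt_notin srt.
have sum_s : \sum_(r <- s | st r) move_weight (x :: s) r *: opprod [eta f with r |-> red r] (x :: s) p
    = \sum_(r <- s | st r) move_weight s r *: f x (opprod [eta f with r |-> red r] s p).
  rewrite big_seq_cond [RHS]big_seq_cond; apply: eq_bigr => r /andP[rs _] /=.
  have xr : ord_lt x r := allP x_lt r rs.
  have rNx : (x == r) = false by apply: contraTF xr => /eqP->; rewrite /ord_lt ltnn.
  by rewrite /move_weight /= rNx /ord_lt ltnNge (ltnW xr) andbF.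
have lfx := linf x.
rewrite IH ?(path_sorted srt) // (linear_funD lfx) (linear_funZ lfx) (linear_fun_sum lfx).
rewrite f_aplus big_cons sum_s /= eqxx opprod_with_notin //.
under eq_bigr do rewrite (linear_funZ lfx).
have -> : move_weight (x :: s) x = (1 - tt_) * tt_ ^+ count fr s.
  rewrite /move_weight /= {1}/ord_lt ltnn andbF add0n; congr (_ * _ ^+ _).
  by apply: eq_in_count => y ys; rewrite (allP x_lt y ys) andbT.
rewrite scalerDr scalerA -exprD addnC -addrA; congr (_ + _).
by case: (st x); rewrite ?scaler0 ?add0r // scalerA mulrC.
Qed.

Lemma trace_coef_aplus_rec s1 s2 n : sorted (@ord_lt L) s1 -> sorted (@ord_lt L) s2 ->
  trace_coef (fun p => opprod f s1 (aplus (opprod f s2 p))) n =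
  \sum_(r <- s1 | st r) move_weight s1 r
       * trace_coef (fun p => opprod [eta f with r |-> red r] s1 (opprod f s2 p)) n
  + (if n is n'.+1 then tt_ ^+ count fr s1 *
       (tt_ ^+ count fr s2 * trace_coef (fun p => opprod f s1 (aplus (opprod f s2 p))) n'
       + \sum_(r <- s2 | st r) move_weight s2 r
           * trace_coef (fun p => opprod f s1 (opprod [eta f with r |-> red r] s2 p)) n')
     else 0).
Proof.
move=> srt1 srt2; rewrite {1}/trace_coef opprod_aplus //.
rewrite coefD coefZ coef_sum addrC; congr (_ + _).
  by apply: eq_bigr => r _; rewrite coefZ.
have := trace_coef_aplus (fun p => opprod f s1 (opprod f s2 p)) n; rewrite /trace_coef /= => ->.
case: n => [|n]; first by rewrite mulr0.
have lf1 := linear_opprod s1 linf.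
rewrite opprod_aplus // (linear_funD lf1) (linear_funZ lf1) (linear_fun_sum lf1).
rewrite coefD coefZ coef_sum; congr (_ * (_ + _)).
by apply: eq_bigr => r _; rewrite (linear_funZ lf1) coefZ.
Qed.

End CreationMove.

Definition qshift (g : K) (X : series) : series :=
  fun n => if n is n'.+1 then g * X n' else 0.

Definition sermono (w : nat) (c : K) : series := fun k => if k == w then c else 0.

Lemma sermul0r (W : series) n : sermul W (fun _ => 0) n = 0.
Proof. by rewrite /sermul big1 // => k _; rewrite mulr0. Qed.

Lemma eq_sermulr (W X Y : series) n : X =1 Y -> sermul W X n = sermul W Y n.
Proof. by move=> eXY; apply: eq_bigr => k _; rewrite eXY. Qed.

Lemma sermul_mono w c X n :
  sermul (sermono w c) X n = if (w <= n)%N then c * X (n - w)%N else 0.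
Proof.
rewrite /sermul /sermono; case: leqP => wn.
  rewrite (bigD1 (Ordinal (wn : (w < n.+1)%N))) //= eqxx big1 ?addr0 // => k kw.
  by rewrite -val_eqE /= in kw; rewrite (negbTE kw) mul0r.
rewrite big1 // => k _; case: eqP => [kw|_]; last by rewrite mul0r.
by move: (ltn_ord k); rewrite kw ltnS leqNgt wn.
Qed.

Lemma sermul_qshiftl (W D X : series) (g : K) :
  (forall k, W k = D k + qshift g W k) ->
  forall n, sermul W X n = sermul D X n + qshift g (sermul W X) n.
Proof.
move=> eW n; rewrite /sermul.
under eq_bigr => k _ do rewrite eW mulrDl.
rewrite big_split /=; congr (_ + _).
case: n => [|n]; first by rewrite big_ord1 /= mul0r.
rewrite big_ord_recl /= mul0r add0r mulr_sumr; apply: eq_bigr => k _.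
by rewrite /bump /= add1n subSS mulrA.
Qed.

Lemma sermul_qshiftr (W X : series) (g : K) n :
  sermul W (fun k => X k - qshift g X k) n = sermul W X n - qshift g (sermul W X) n.
Proof.
rewrite /sermul; under eq_bigr => k _ do rewrite mulrBr.
rewrite sumrB; congr (_ - _).
case: n => [|n]; first by rewrite big_ord1 /= mulr0.
rewrite big_ord_recr /= subnn /= mulr0 addr0 mulr_sumr; apply: eq_bigr => k _.
by rewrite subSn /=; [rewrite mulrCA | rewrite -ltnS].
Qed.

(* [W r = D r / (1 - g q)], hence [T = (\sum_r D r * T' r) / (1 - g q)]. *)
Lemma qshift_fixpoint_sum (I : finType) (P : pred I) (W D T' : I -> series) (g : K)
    (T : series) :
  (forall r k, W r k = D r k + qshift g (W r) k) ->
  (forall n, T n = \sum_(r | P r) sermul (D r) (T' r) n + qshift g T n) ->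
  forall n, T n = \sum_(r | P r) sermul (W r) (T' r) n.
Proof.
move=> eW eT; elim/ltn_ind => n IH; rewrite eT.
under [RHS]eq_bigr => r _ do rewrite (sermul_qshiftl (T' r) (eW r)).
rewrite big_split /=; congr (_ + _).
case: n IH => [|n] IH /=; first by rewrite big1.
by rewrite IH // mulr_sumr.
Qed.

Lemma wtser_fixpoint L (c c' : 'I_L) F k :
  wtser c c' F k = sermono (Defs.wrap c c') ((1 - tt_) * tt_ ^+ sgap c c' F) k
    + qshift (tt_ ^+ nfree F) (wtser c c' F) k.
Proof.
rewrite /wtser /sermono /qshift /Defs.wrap; case: (c < c')%N => /=.
  case: k => [|[|k]] //=; first by rewrite addr0.
    by rewrite mulr0 addr0 subnn muln0 expr0 mulr1.
  by rewrite add0r mulnS exprD subSS subn0; ring.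
case: k => [|k] /=; first by rewrite muln0 expr0 mulr1 addr0.
by rewrite add0r !subn0 mulnS exprD; ring.
Qed.

Lemma pairsum_eq0 L (i : vec L) (ok : {set 'I_L} -> bool) cs (F : {set 'I_L}) :
  (forall F' : {set 'I_L}, F' \subset F -> ok F' = false) ->
  forall n, pairsum i cs F ok n = 0.
Proof.
elim: cs F => [|c cs IH] F nok n /=; first by rewrite nok.
have nok' c' : forall F' : {set 'I_L}, F' \subset F :\ c' -> ok F' = false.
  by move=> F' sF'; apply/nok/(subset_trans sF')/subD1set.
case: (i c) => /=; last exact: IH.
case: (c \in F); first exact: IH (nok' c) n.
by rewrite big1 // => c' _; rewrite (eq_sermulr _ _ (IH _ (nok' c'))) sermul0r.
Qed.

Section PartialTransfer.
Variables (L : nat) (a b i j : vec L).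
Hypothesis hab : forall x, (a x + b x = j x)%N.

Lemma a_excl_b x : a x -> b x = false.
Proof. by move=> ax; have := hab x; rewrite ax; case: (b x); case: (j x). Qed.

(* Vertex of a partial configuration: the lower balls still to be paired are
   those of [i] in the columns [cs] and the free upper balls are [F]; the full
   configuration is [cs = enum 'I_L], [F = supp j]. *)
Definition col_op (cs : seq 'I_L) (F : {set 'I_L}) (x : 'I_L) : Fock -> Fock :=
  Sop (a x && (x \in F)) (b x) (i x && (x \in cs)) (x \in F).

Definition ptrace (cs : seq 'I_L) (F : {set 'I_L}) (n : nat) : K :=
  trace_coef (opprod (col_op cs F) (enum 'I_L)) n.

Definition consumed_op (cs : seq 'I_L) (x : 'I_L) : Fock -> Fock :=
  Sop false false (i x && (x \in cs)) false.

Section Step.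
Variables (F : {set 'I_L}) (c : 'I_L) (cs : seq 'I_L).
Hypotheses (Fsub : forall x, x \in F -> j x) (bsub : forall x, b x -> x \in F).
Hypotheses (cNF : c \notin F) (ic : i c) (srt : sorted (@ord_lt L) (c :: cs)).

Let bc : b c = false.
Proof. by apply: contraNF cNF; apply: bsub. Qed.

Let cNcs : c \notin cs := sorted_ord_lt_notin srt.

Lemma col_op_aplus x p : col_op (c :: cs) F x (aplus p) =
  tt_ ^+ (x \in F) *: aplus (col_op (c :: cs) F x p)
  + (if a x && (x \in F) then (1 - tt_) *: consumed_op cs x p else 0).
Proof.
rewrite /col_op Sop_aplus; last first.
  case xF: (x \in F); first by rewrite andbT hab Fsub.
  by rewrite andbF; case bx: (b x) => //; move: (bsub bx); rewrite xF.
case axF: (a x && (x \in F)) => //.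
have xc : x != c by apply: contraTneq axF => ->; rewrite (negbTE cNF) andbF.
by rewrite /consumed_op inE (negbTE xc).
Qed.

Let s1 := filter (fun x : 'I_L => x < c)%N (enum 'I_L).
Let s2 := filter (fun x : 'I_L => c < x)%N (enum 'I_L).

Let enum_split : enum 'I_L = s1 ++ c :: s2.
Proof. by apply: sorted_split_at; [apply: sorted_ord_enum | rewrite mem_enum]. Qed.

Let mem_s1 x : (x \in s1) = (x < c)%N.
Proof. by rewrite mem_filter mem_enum andbT. Qed.

Let mem_s2 x : (x \in s2) = (c < x)%N.
Proof. by rewrite mem_filter mem_enum andbT. Qed.

Lemma col_op_red r x : a r -> r \in F -> x != c ->
  col_op cs (F :\ r) x = [eta col_op (c :: cs) F with r |-> consumed_op cs r] x.
Proof.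
move=> ar rF xc; rewrite /= /col_op /consumed_op.
case: eqP => [->|/eqP xr]; first by rewrite in_setD1 eqxx /= andbF (a_excl_b ar).
by rewrite in_setD1 xr inE (negbTE xc).
Qed.

Lemma ptrace_red r m : a r -> r \in F ->
  ptrace cs (F :\ r) m = trace_coef (fun p =>
    opprod [eta col_op (c :: cs) F with r |-> consumed_op cs r] s1
      (opprod [eta col_op (c :: cs) F with r |-> consumed_op cs r] s2 p)) m.
Proof.
move=> ar rF; rewrite /ptrace /trace_coef enum_split opprod_cat /=.
have -> : col_op cs (F :\ r) c = id.
  by rewrite /col_op in_setD1 (negbTE cNF) !andbF bc (negbTE cNcs) andbF.
have eq_s (s : seq 'I_L) p : c \notin s ->
    opprod (col_op cs (F :\ r)) s p
    = opprod [eta col_op (c :: cs) F with r |-> consumed_op cs r] s p.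
  elim: s => //= x s IH; rewrite inE negb_or => /andP[xc /IH ->].
  by rewrite col_op_red // eq_sym.
by rewrite !eq_s // ?mem_s1 ?mem_s2 ltnn.
Qed.

Lemma nfree_split : nfree F = (count (mem F) s1 + count (mem F) s2)%N.
Proof. by rewrite /nfree cardE size_filter -enumT enum_split count_cat /= (negbTE cNF). Qed.

Lemma sgap_s1 r : r \in s1 -> sgap c r F = count (fun x => (x \in F) && ord_lt r x) s1.
Proof.
rewrite mem_s1 => rc; rewrite /sgap card_set_count enum_split count_cat /= (negbTE cNF).
rewrite add0n [X in (_ + X)%N](_ : _ = 0%N) ?addn0.
  apply: eq_in_count => x; rewrite mem_s1 => xc /=.
  by rewrite cyclic_between ?(ltn_eqF rc) // rc xc andbT.
apply/eqP; rewrite eqn0Ngt -has_count; apply/hasPn => x; rewrite mem_s2 => cx /=.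
by rewrite cyclic_between ?(ltn_eqF rc) // rc (leq_gtF (ltnW cx)) !andbF.
Qed.

Lemma sgap_s2 r : r \in s2 ->
  sgap c r F = (count (mem F) s1 + count (fun x => (x \in F) && ord_lt r x) s2)%N.
Proof.
rewrite mem_s2 => cr; rewrite /sgap card_set_count enum_split count_cat /= (negbTE cNF).
congr (_ + _)%N; apply: eq_in_count => x.
  by rewrite mem_s1 => xc /=; rewrite cyclic_between ?(gtn_eqF cr) // (leq_gtF (ltnW cr)) xc orbT andbT.
by rewrite mem_s2 => cx /=; rewrite cyclic_between ?(gtn_eqF cr) // (leq_gtF (ltnW cr)) (leq_gtF (ltnW cx)) orbF.
Qed.

Lemma ptrace_rec n : ptrace (c :: cs) F n =
  \sum_(r | a r && (r \in F))
     sermul (sermono (Defs.wrap c r) ((1 - tt_) * tt_ ^+ sgap c r F)) (ptrace cs (F :\ r)) n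
  + qshift (tt_ ^+ nfree F) (ptrace (c :: cs) F) n.
Proof.
set f := col_op (c :: cs) F.
have linf x : linear (f x) := linear_Sop _ _ _ _.
have srt1 : sorted (@ord_lt L) s1 := sorted_filter (@ord_lt_trans L) _ (sorted_ord_enum L).
have srt2 : sorted (@ord_lt L) s2 := sorted_filter (@ord_lt_trans L) _ (sorted_ord_enum L).
have eT m : ptrace (c :: cs) F m = trace_coef (fun p => opprod f s1 (aplus (opprod f s2 p))) m.
  rewrite /ptrace /trace_coef enum_split opprod_cat /= {2}/f /col_op.
  by rewrite (negbTE cNF) andbF bc ic mem_head.
have := trace_coef_aplus_rec linf col_op_aplus n srt1 srt2.
rewrite -eT => ->.
have -> (G : 'I_L -> K) : \sum_(r | a r && (r \in F)) G r
    = \sum_(r <- enum 'I_L | a r && (r \in F)) G r by rewrite big_enum_cond.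
rewrite enum_split big_cat big_cons /=.
rewrite (negbTE cNF) andbF -addrA; congr (_ + _).
  rewrite big_seq_cond [RHS]big_seq_cond; apply: eq_bigr => r /andP[rs1 /andP[ar rF]].
  have rc : (r < c)%N by rewrite -mem_s1.
  rewrite sermul_mono /Defs.wrap ltnNge (ltnW rc) /= subn0 ptrace_red // sgap_s1 //.
  by rewrite /trace_coef (@opprod_with_notin _ _ _ _ s2) // mem_s2 -leqNgt ltnW.
case: n => [|n] /=.
  rewrite addr0 big_seq_cond big1 // => r /andP[rs2 _].
  by rewrite sermul_mono /Defs.wrap -mem_s2 rs2.
rewrite eT mulrDr addrC mulrA -exprD -nfree_split; congr (_ + _).
rewrite mulr_sumr big_seq_cond [RHS]big_seq_cond; apply: eq_bigr => r /andP[rs2 /andP[ar rF]].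
have cr : (c < r)%N by rewrite -mem_s2.
rewrite sermul_mono /Defs.wrap cr /= subn1 /= ptrace_red // sgap_s2 // exprD.
rewrite /trace_coef (@opprod_with_notin _ _ _ _ s1) ?mem_s1 -?leqNgt ?(ltnW cr) //.
by rewrite /move_weight; ring.
Qed.

End Step.
End PartialTransfer.

Section PairingsAsTraces.
Variables (L : nat) (a b i j : vec L).
Hypothesis hab : forall x, (a x + b x = j x)%N.

Let e := count b (enum 'I_L).

Definition Sptrace (cs : seq 'I_L) (F : {set 'I_L}) (n : nat) : K :=
  ptrace a b i cs F n - qshift (tt_ ^+ e) (ptrace a b i cs F) n.

Definition chosen_ok (F' : {set 'I_L}) : bool := supp j :\: F' == supp a.

Definition pairsum_eq_Sptrace (cs : seq 'I_L) : Prop :=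
  forall F : {set 'I_L}, (forall x, x \in F -> j x) -> (forall x, b x -> x \in F) ->
  pairsum i cs F chosen_ok =1 Sptrace cs F.

Lemma j_of_a x : a x -> j x.
Proof. by move=> ax; have := hab x; rewrite ax; case: (j x). Qed.

Lemma chosen_ok_false (F F' : {set 'I_L}) r :
  F' \subset F :\ r -> j r -> a r = false -> chosen_ok F' = false.
Proof.
move=> sF' jr ar; apply/negP => /eqP/setP/(_ r); rewrite !inE jr ar andbT.
by move=> /negbFE/(subsetP sF'); rewrite !inE eqxx.
Qed.

Lemma Sptrace_eq0 cs F : ptrace a b i cs F =1 (fun _ => 0) -> Sptrace cs F =1 (fun _ => 0).
Proof. by move=> T0 [|n]; rewrite /Sptrace /qshift T0 ?T0 ?mulr0 subr0. Qed.

Lemma eq_Sptrace cs cs' F F' :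
  ptrace a b i cs F =1 ptrace a b i cs' F' -> Sptrace cs F =1 Sptrace cs' F'.
Proof. by move=> eT [|n]; rewrite /Sptrace /qshift !eT. Qed.

Lemma pairsum_eq_Sptrace_nil : pairsum_eq_Sptrace [::].
Proof.
move=> F Fsub bsub n /=.
have [x /andP[ax xF]|noa] := pickP (fun x => a x && (x \in F)).
  have -> : chosen_ok F = false.
    by apply/negP => /eqP/setP/(_ x); rewrite !inE xF ax.
  have fsize y q : (size (col_op a b i [::] F y q) <= size q)%N.
    rewrite /col_op in_nil andbF.
    case: (a y) (b y) (y \in F) => [] [] [] /=;
      by rewrite ?size_kop ?size_poly0 // (leq_trans (size_aminus _) (leq_pred _)).
  have fx : col_op a b i [::] F x = aminus.
    by rewrite /col_op ax xF (a_excl_b hab ax) in_nil andbF.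
  symmetry; apply: Sptrace_eq0 => m; rewrite /ptrace /trace_coef nth_default //.
  by have := @size_opprod_aminus _ _ _ _ 'X^m fsize (mem_enum _ x) fx; rewrite size_polyXn.
have bF y : y \notin F -> b y = false by move/negbTE; apply: contraFF (@bsub y).
have -> : chosen_ok F.
  apply/eqP/setP => x; rewrite !inE; case xF: (x \in F) => /=.
    by have := noa x; rewrite xF andbT.
  by have := hab x; rewrite bF ?xF // addn0; case: (a x) (j x) => [] [].
have eT m : ptrace a b i [::] F m = tt_ ^+ (m * e).
  rewrite /ptrace /trace_coef (opprod_kop (P := b)) ?coefZ ?coefXn ?eqxx ?mulr1 //.
  move=> y; rewrite /col_op in_nil andbF; case yF: (y \in F); last by rewrite andbF bF ?yF.
  have ay : a y = false by have := noa y; rewrite yF andbT.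
  by have := hab y; rewrite ay Fsub //; case: (b y).
rewrite /Sptrace /qshift /ser1 !eT; case: n => [|n] /=; first by rewrite subr0.
by rewrite eT -exprD mulSn subrr.
Qed.

Section Cons.
Variables (c : 'I_L) (cs : seq 'I_L) (F : {set 'I_L}).
Hypotheses (srt : sorted (@ord_lt L) (c :: cs)) (IH : pairsum_eq_Sptrace cs).
Hypotheses (Fsub : forall x, x \in F -> j x) (bsub : forall x, b x -> x \in F).

Let cNcs : c \notin cs := sorted_ord_lt_notin srt.

Lemma pairsum_cons_skip : ~~ i c ->
  pairsum i (c :: cs) F chosen_ok =1 Sptrace (c :: cs) F.
Proof.
move=> iNc n; rewrite /= (negbTE iNc) /= IH //; apply: eq_Sptrace => m.
rewrite /ptrace /trace_coef (@eq_opprod _ (col_op a b i (c :: cs) F) (col_op a b i cs F)) // => x p.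
rewrite /col_op inE.
by case: eqP => [->|] //=; rewrite (negbTE iNc).
Qed.

Lemma pairsum_cons_blocked : i c -> c \in F -> b c ->
  pairsum i (c :: cs) F chosen_ok =1 Sptrace (c :: cs) F.
Proof.
move=> ic cF bc n; have ac : a c = false by apply: contraTF bc => /(a_excl_b hab) ->.
rewrite /= ic cF /= pairsum_eq0; last by move=> F' sF'; apply: chosen_ok_false sF' (Fsub cF) ac.
symmetry; apply: Sptrace_eq0 => m; rewrite /ptrace /trace_coef.
rewrite (opprod_eq0 _ (fun y => linear_Sop _ _ _ _) (mem_enum _ c)) ?coef0 // => p.
by rewrite /col_op ac bc cF ic mem_head.
Qed.

Lemma pairsum_cons_trivial : i c -> c \in F -> ~~ b c ->
  pairsum i (c :: cs) F chosen_ok =1 Sptrace (c :: cs) F.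
Proof.
move=> ic cF bNc n; have ac : a c by have := hab c; rewrite (negbTE bNc) Fsub //; case: (a c).
rewrite /= ic cF /= IH; first last.
- by move=> x bx; rewrite in_setD1 bsub // andbT; apply: contraNneq bNc => <-.
- by move=> x /setD1P[_ /Fsub].
apply: eq_Sptrace => m.
rewrite /ptrace /trace_coef (@eq_opprod _ (col_op a b i (c :: cs) F) (col_op a b i cs (F :\ c))) // => x p.
rewrite /col_op in_setD1 inE; case: eqP => [->|] //=.
by rewrite ac (negbTE bNc) cF ic (negbTE cNcs).
Qed.

Lemma Sptrace_cons_choose : i c -> c \notin F -> forall n,
  Sptrace (c :: cs) F n =
  \sum_(r | a r && (r \in F)) sermul (wtser c r F) (Sptrace cs (F :\ r)) n.
Proof.
move=> ic cNF.
have eT := qshift_fixpoint_sum (fun r => wtser_fixpoint c r F)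
  (ptrace_rec hab Fsub bsub cNF ic srt).
move=> n; rewrite /Sptrace.
under eq_bigr => r _ do rewrite (sermul_qshiftr (wtser c r F) (ptrace a b i cs (F :\ r))).
rewrite sumrB eT; congr (_ - _).
by case: n => [|n] /=; [rewrite big1 | rewrite eT mulr_sumr].
Qed.

Lemma pairsum_cons_choose : i c -> c \notin F ->
  pairsum i (c :: cs) F chosen_ok =1 Sptrace (c :: cs) F.
Proof.
move=> ic cNF n; rewrite Sptrace_cons_choose // /= ic (negbTE cNF) /=.
rewrite (bigID a) /= [X in _ + X]big1 ?addr0 => [|r /andP[/andP[rF _] /negbTE ar]].
  apply: eq_big => [r|r /andP[/andP[rF _] ar]].
    by case rF: (r \in F); rewrite ?andbF //= andbC; congr (_ && _); apply: contraTneq rF => ->.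
  apply: eq_sermulr => k; apply: IH => [x /setD1P[_ /Fsub] //|x bx].
  by rewrite in_setD1 bsub // andbT; apply: contraTneq bx => ->; rewrite (a_excl_b hab ar).
rewrite (eq_sermulr _ _ (pairsum_eq0 _ _ _)) ?sermul0r // => F' sF'.
exact: chosen_ok_false sF' (Fsub rF) ar.
Qed.

End Cons.

Lemma pairsum_eq_Sptrace_sorted cs : sorted (@ord_lt L) cs -> pairsum_eq_Sptrace cs.
Proof.
elim: cs => [|c cs IH] srt; first exact: pairsum_eq_Sptrace_nil.
have IHcs := IH (path_sorted srt).
move=> F Fsub bsub; have [ic|iNc] := boolP (i c); last exact: pairsum_cons_skip.
have [cF|cNF] := boolP (c \in F); last exact: pairsum_cons_choose.
have [bc|bNc] := boolP (b c); first exact: pairsum_cons_blocked.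
exact: pairsum_cons_trivial.
Qed.
End PairingsAsTraces.

Lemma trser_ptrace L (a b i j : vec L) : (forall x, (a x + b x = j x)%N) ->
  trser a b i j =1 ptrace a b i (enum 'I_L) (supp j).
Proof.
move=> hab n; rewrite /trser Sprod_opprod /ptrace /trace_coef.
rewrite (@eq_opprod _ _ (col_op a b i (enum 'I_L) (supp j))) // => x p.
rewrite /col_op mem_enum andbT inE.
by case ax: (a x) => //=; rewrite (j_of_a hab ax).
Qed.

Lemma trser_eq0 L (a b i j : vec L) n : ~~ Defs.sum_eq a b j -> trser a b i j n = 0.
Proof.
case/forallPn => x abx; rewrite /trser Sprod_opprod.
rewrite (opprod_eq0 _ (fun y => linear_Sop _ _ _ _) (mem_enum _ x)) ?coef0 // => p.
by move: abx; case: (a x) (b x) (i x) (j x) => [] [] [] [].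
Qed.

Lemma count_inB L k (x : vec L) : inB k x -> count x (enum 'I_L) = k.
Proof.
move/eqP <-; symmetry; rewrite -sum1_count big_enum_cond [RHS]big_mkcond /=.
by apply: eq_bigr => y _; case: (x y).
Qed.

Local Close Scope ring_scope.

(* Only [inB (m - l) b] is needed: it fixes the exponent of [t] in the prefactor
   [1 - q t^(m-l)]. *)
Theorem theorem4p1 (L l m : nat) (i a : vec L) (j : vec L) (b : vec L) :
  (1 <= L)%N -> (l < m)%N -> (m <= L)%N ->
  inB l i -> inB l a -> inB m j -> inB (m - l) b ->
  forall n : nat, Mser a b i j n = Sser l m a b i j n.
Proof.
move=> _ _ _ _ _ _ b_card n; rewrite /Mser /Sser.
have [/forallP hab|abNj] := boolP (Defs.sum_eq a b j); last first.
  by case: n => [|n]; rewrite !trser_eq0 // ?mulr0 subr0.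
have {}hab x : (a x + b x = j x)%N by apply/eqP.
have bsub x : b x -> x \in supp j.
  by move=> bx; rewrite inE; have := hab x; rewrite bx; case: (j x); rewrite ?addn1.
rewrite (pairsum_eq_Sptrace_sorted i hab (sorted_ord_enum L)) // => [|x]; last by rewrite inE.
rewrite /Sptrace (count_inB b_card) /qshift.
by case: n => [|n]; rewrite !(trser_ptrace _ hab).
Qed.
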